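(* Let $n$ be sufficiently large, let $k \ge 4\log_2 n + 2$ be an integer, and let $T_k$ be any tournament on $k$ vertices. Then OBreaker has a winning strategy in the orientation game $Or(T_k,n)$.
   Context: A tournament is a directed graph in which every pair of distinct vertices is joined by exactly one directed edge. The orientation game $Or(T_k,n)$ is played on the edge set of $K_n$ by two players, OMaker and OBreaker. OMaker moves first, and the players then alternate. In each move the player chooses one previously undirected edge of $K_n$ and gives it a direction. The game ends when all edges are directed. OMaker wins if the final digraph, which contains the edges directed by both players, contains a copy of $T_k$; otherwise OBreaker wins. *)

From mathcomp Require Import all_boot.
Set Implicit Arguments. Unset Strict Implicit. Unset Printing Implicit Defensive.

Definition is_tournament (k : nat) (T : rel 'I_k) : Prop :=
  (forall i, ~~ T i i) /\
  (forall i j, i != j -> (T i j || T j i) && ~~ (T i j && T j i)).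

(* A (partial) orientation of K_n: D u v means the edge {u,v} was directed u -> v. *)
Definition legal_move (n : nat) (D : rel 'I_n) (u v : 'I_n) : bool :=
  [&& u != v, ~~ D u v & ~~ D v u].

Definition add_arc (n : nat) (D : rel 'I_n) (u v : 'I_n) : rel 'I_n :=
  fun x y => D x y || ((x == u) && (y == v)).

Definition all_directed (n : nat) (D : rel 'I_n) : Prop :=
  forall u v : 'I_n, u != v -> D u v || D v u.

Definition contains_copy (k n : nat) (T : rel 'I_k) (D : rel 'I_n) : Prop :=
  exists f : 'I_k -> 'I_n, injective f /\ forall i j, T i j -> D (f i) (f j).

Definition empty_orientation (n : nat) : rel 'I_n := fun _ _ => false.

(* OBreaker_wins T maker_to_move D : OBreaker has a winning strategy in the
   orientation game Or(T,n) from position D, with OMaker to move iff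
   maker_to_move. *)
Inductive OBreaker_wins (k n : nat) (T : rel 'I_k) : bool -> rel 'I_n -> Prop :=
| OBw_end : forall b D, all_directed D -> ~ contains_copy T D ->
    OBreaker_wins T b D
| OBw_maker : forall D, ~ all_directed D ->
    (forall u v, legal_move D u v -> OBreaker_wins T false (add_arc D u v)) ->
    OBreaker_wins T true D
| OBw_breaker : forall D, ~ all_directed D ->
    (exists u v, legal_move D u v /\ OBreaker_wins T true (add_arc D u v)) ->
    OBreaker_wins T false D.

Definition OBreaker_has_winning_strategy (k n : nat) (T : rel 'I_k) : Prop :=
  OBreaker_wins (n:=n) T true (@empty_orientation n).

From mathcomp Require Import all_boot all_order all_algebra.
From mathcomp Require Import realalg.
From mathcomp.algebra_tactics Require Import lra.
From mathcomp Require Import zify.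
Set Implicit Arguments. Unset Strict Implicit. Unset Printing Implicit Defensive.
Import Order.TTheory GRing.Theory Num.Theory.
Local Open Scope ring_scope.

(* OBreaker wins Or(T_k, n) by a weighted Erdős–Selfridge potential argument
   with base lam = sqrt 2.  A "copy" of T is an injective map f : 'I_k -> 'I_n;
   it is alive in a partial orientation D if no arc of D goes against an arc of
   T under f, and then it weighs lam ^ (number of arcs of T realized by D).
   The potential of D is the total weight of all copies.
   - OBreaker picks the undirected ordered pair (x, y) of largest weight, i.e.
     the pair whose orientation x -> y is needed by the heaviest set of live
     copies, and directs it y -> x, killing all those copies.  Copy by copy,
     this move followed by any OMaker move changes the weight by at most the
     amount in [round_weight_bound]; summing, and using the maximality of
     (x, y), the potential never increases over a round.
   - After OMaker's first move the potential is at most lam * n ^ k, while a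
     copy of T in a complete orientation has weight lam ^ e(T), where
     e(T) >= k(k-1)/2 for a tournament; the hypothesis n ^ 4 <= 2 ^ (k - 2)
     makes lam * n ^ k < lam ^ e(T), so no copy of T can ever appear. *)

Definition arcs (k : nat) (T : rel 'I_k) : {set 'I_k * 'I_k} :=
  [set p | T p.1 p.2].

(* Change of the weight of one copy over a round (an OBreaker move, then an
   OMaker move): the copy dies if it needed the arc OBreaker reversed, and is
   multiplied by lam for each of the two new arcs it uses.  Since lam^2 = 2,
   the gain is bounded linearly in the indicator of each event. *)
Lemma round_weight_bound (R : realFieldType) (lam w0 w1 w2 : R)
    (killed gained made : bool) :
  1 <= lam -> lam ^+ 2 = 2 -> 0 <= w0 -> 0 <= w1 ->
  (killed -> w1 = 0) -> w1 <= (if gained then lam else 1) * w0 ->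
  w2 <= (if made then lam else 1) * w1 ->
  w2 <= w0 - (if killed then w0 else 0) + (2 - lam) * (if gained then w0 else 0)
        + (lam - 1) * (if made then w0 else 0).
Proof.
move=> lam_ge1 lam_sqr w0_ge0 w1_ge0 w1_killed.
case: killed w1_killed => [/(_ isT) -> | _]; case: gained; case: made => /=; nra.
Qed.

Section Orientations.
Variable n : nat.
Implicit Types (D : rel 'I_n) (x y u v : 'I_n).

(* No edge is directed both ways; every position of the game has this form. *)
Definition antisymmetric D : Prop := forall u v, D u v -> ~~ D v u.

(* The number of ordered pairs (u, v) without an arc u -> v; it strictly
   decreases with every move, so the game is finite. *)
Definition undirected_pairs D : nat := #|[set p : 'I_n * 'I_n | ~~ D p.1 p.2]|.

Lemma legal_move_sym D x y : legal_move D x y -> legal_move D y x.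
Proof. by case/and3P=> xy Dxy Dyx; apply/and3P; rewrite eq_sym. Qed.

Lemma legal_move_add_arc D x y u v :
  legal_move (add_arc D x y) u v -> legal_move D u v.
Proof.
by rewrite /legal_move /add_arc !negb_or => /and3P[-> /andP[-> _] /andP[-> _]].
Qed.

Lemma undirected_pairs_add_arc D x y : legal_move D x y ->
  (undirected_pairs (add_arc D x y) < undirected_pairs D)%N.
Proof.
case/and3P=> _ Dxy _; apply: proper_card; apply/properP; split.
  by apply/subsetP=> p; rewrite !inE /add_arc negb_or => /andP[].
by exists (x, y); rewrite !inE /add_arc ?Dxy // !eqxx orbT.
Qed.

Lemma antisymmetric_add_arc D x y :
  antisymmetric D -> legal_move D x y -> antisymmetric (add_arc D x y).
Proof.
move=> antiD /and3P[xy Dxy Dyx] u v; rewrite /add_arc negb_or.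
case/orP=> [Duv | /andP[/eqP-> /eqP->]].
  by rewrite antiD //=; apply: contraTN Duv => /andP[/eqP-> /eqP->].
by rewrite (negbTE Dyx) /=; apply: contraNN xy => /andP[/eqP-> _].
Qed.

Lemma all_directed_no_move D :
  ~~ [exists p : 'I_n * 'I_n, legal_move D p.1 p.2] -> all_directed D.
Proof.
move=> no_move u v uv; apply: contraNT no_move; rewrite negb_or => undir.
by apply/existsP; exists (u, v); rewrite /legal_move uv.
Qed.

Lemma not_all_directed_move D x y : legal_move D x y -> ~ all_directed D.
Proof.
by case/and3P=> xy Dxy Dyx /(_ x y xy); rewrite (negbTE Dxy) (negbTE Dyx).
Qed.

End Orientations.

Section Potential.
Variables (k n : nat) (T : rel 'I_k) (R : realFieldType) (lam : R).
Hypothesis lam_sqr : lam ^+ 2 = 2.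
Hypothesis lam_ge1 : 1 <= lam.

Local Notation copy := {ffun 'I_k -> 'I_n}.

Definition copy_uses (f : copy) (x y : 'I_n) : bool :=
  [exists p in arcs T, (f p.1 == x) && (f p.2 == y)].

Definition copy_alive (D : rel 'I_n) (f : copy) : bool :=
  [forall p in arcs T, ~~ D (f p.2) (f p.1)].

Definition copy_realized (D : rel 'I_n) (f : copy) : nat :=
  #|[set p in arcs T | D (f p.1) (f p.2)]|.

Definition copy_weight (D : rel 'I_n) (f : copy) : R :=
  if copy_alive D f then lam ^+ copy_realized D f else 0.

Definition potential (D : rel 'I_n) : R :=
  \sum_(f : copy | injectiveb f) copy_weight D f.

Definition arc_weight (D : rel 'I_n) (x y : 'I_n) : R :=
  \sum_(f : copy | injectiveb f) (if copy_uses f x y then copy_weight D f else 0).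

Lemma lam_ge0 : 0 <= lam. Proof. exact: le_trans lam_ge1. Qed.

Lemma copy_weight_ge0 D f : 0 <= copy_weight D f.
Proof. by rewrite /copy_weight; case: ifP => // _; exact: exprn_ge0 lam_ge0. Qed.

Lemma arc_weight_ge0 D x y : 0 <= arc_weight D x y.
Proof. by apply: sumr_ge0 => f _; case: ifP => // _; exact: copy_weight_ge0. Qed.

Lemma copy_alive_add_arc D x y f : copy_alive (add_arc D x y) f -> copy_alive D f.
Proof.
move/forall_inP=> alive; apply/forall_inP=> p /alive.
by rewrite /add_arc negb_or => /andP[].
Qed.

Lemma copy_realized_add_arc D x y (f : copy) : injective f ->
  (copy_realized (add_arc D x y) f <= copy_realized D f + copy_uses f x y)%N.
Proof.
move=> f_inj; set new := [set p in arcs T | (f p.1 == x) && (f p.2 == y)].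
apply: (@leq_trans #|[set p in arcs T | D (f p.1) (f p.2)] :|: new|).
  by apply: subset_leq_card; apply/subsetP=> p; rewrite !inE /add_arc andb_orr.
apply: (leq_trans (leq_card_setU _ _)); rewrite leq_add2l.
case: (boolP (copy_uses f x y)) => [|unused].
  case/exists_inP=> p0 _ /andP[/eqP f1 /eqP f2].
  apply: (@leq_trans #|[set p0]|); last by rewrite cards1.
  apply: subset_leq_card; apply/subsetP=> -[a b].
  rewrite !inE => /and3P[_ /eqP fa /eqP fb].
  case: p0 f1 f2 => a0 b0 /= f1 f2.
  by rewrite (f_inj a a0); [rewrite (f_inj b b0) // fb f2 | rewrite fa f1].
rewrite leqn0 cards_eq0; apply/eqP/setP=> p; rewrite !inE.
apply/negP=> /andP[Tp fp]; case/negP: unused; apply/exists_inP; exists p => //.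
by rewrite inE.
Qed.

Lemma copy_weight_add_arc D x y (f : copy) : injective f ->
  copy_weight (add_arc D x y) f <=
  (if copy_uses f x y then lam else 1) * copy_weight D f.
Proof.
move=> f_inj; rewrite /copy_weight; case: ifP => alive; last first.
  by apply: mulr_ge0; [case: ifP => _; rewrite ?lam_ge0 | exact: copy_weight_ge0].
rewrite (copy_alive_add_arc alive); have := copy_realized_add_arc D x y f_inj.
case: (copy_uses f x y) => /= realized.
  by rewrite -exprS; apply: ler_weXn2l => //; rewrite -addn1.
by rewrite mul1r; apply: ler_weXn2l => //; rewrite addn0 in realized.
Qed.

Lemma copy_weight_killed D x y (f : copy) :
  copy_uses f y x -> copy_weight (add_arc D x y) f = 0.
Proof.
case/exists_inP=> p Tp /andP[/eqP f1 /eqP f2]; rewrite /copy_weight.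
case: ifP => // /forall_inP/(_ p Tp).
by rewrite f1 f2 /add_arc !eqxx orbT.
Qed.

Lemma potential_le D (G : copy -> R) :
  (forall f : copy, injective f -> copy_weight D f <= G f) ->
  potential D <= \sum_(f : copy | injectiveb f) G f.
Proof. by move=> bound; apply: ler_sum => f /injectiveP; exact: bound. Qed.

Lemma potential_add_arc D x y : potential (add_arc D x y) <= lam * potential D.
Proof.
rewrite /potential mulr_sumr; apply: ler_sum => f /injectiveP f_inj.
have w_ge0 := copy_weight_ge0 D f; have l1 := lam_ge1.
by have := copy_weight_add_arc D x y f_inj; case: ifP => _; nra.
Qed.

Lemma copy_weight_round D x y a1 a2 (f : copy) : injective f ->
  copy_weight (add_arc (add_arc D y x) a1 a2) f <=
  copy_weight D f - (if copy_uses f x y then copy_weight D f else 0)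
  + (2 - lam) * (if copy_uses f y x then copy_weight D f else 0)
  + (lam - 1) * (if copy_uses f a1 a2 then copy_weight D f else 0).
Proof.
move=> f_inj; apply: (@round_weight_bound _ _ _ (copy_weight (add_arc D y x) f)).
- exact: lam_ge1.
- exact: lam_sqr.
- exact: copy_weight_ge0.
- exact: copy_weight_ge0.
- exact: copy_weight_killed.
- exact: copy_weight_add_arc.
- exact: copy_weight_add_arc.
Qed.

Lemma copy_weight_breaker D x y (f : copy) : injective f ->
  copy_weight (add_arc D y x) f <=
  copy_weight D f - (if copy_uses f x y then copy_weight D f else 0)
  + (2 - lam) * (if copy_uses f y x then copy_weight D f else 0).
Proof.
move=> f_inj; set w1 := copy_weight (add_arc D y x) f.
have := @round_weight_bound _ lam (copy_weight D f) w1 w1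
  (copy_uses f x y) (copy_uses f y x) false.
rewrite /= mulr0 addr0 mul1r; apply=> //; try exact: copy_weight_ge0.
- exact: copy_weight_killed.
- exact: copy_weight_add_arc.
Qed.

(* OBreaker's choice: an undirected pair whose orientation x -> y is needed
   by the heaviest set of copies. *)
Definition heaviest_pair D x y : Prop :=
  legal_move D x y /\
  (forall u v, legal_move D u v -> arc_weight D u v <= arc_weight D x y).

Lemma heaviest_pair_exists D u v : legal_move D u v ->
  exists x y, heaviest_pair D x y.
Proof.
move=> legal_uv; pose P (p : 'I_n * 'I_n) := legal_move D p.1 p.2.
case: (@arg_maxP _ _ _ (u, v) P (fun p => arc_weight D p.1 p.2) legal_uv).
by move=> [x y] legal_xy heaviest; exists x, y; split=> // a b /(heaviest (a, b)).
Qed.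

(* Both coefficients 2 - lam and lam - 1 of the round bound are in [0, 1]. *)
Lemma lam_le2 : lam <= 2.
Proof. by have := lam_ge1; have := lam_sqr; nra. Qed.

Lemma potential_breaker_move D x y : heaviest_pair D x y ->
  potential (add_arc D y x) <= potential D.
Proof.
case=> legal_xy heaviest.
have heavier := heaviest _ _ (legal_move_sym legal_xy).
apply: le_trans (potential_le (copy_weight_breaker D x y)) _.
rewrite big_split big_split sumrN -mulr_sumr /=.
rewrite -/(potential D) -/(arc_weight D x y) -/(arc_weight D y x).
have := arc_weight_ge0 D y x; have := lam_ge1; have := lam_le2; nra.
Qed.

Lemma potential_round D x y a1 a2 : heaviest_pair D x y ->
  legal_move (add_arc D y x) a1 a2 ->
  potential (add_arc (add_arc D y x) a1 a2) <= potential D.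
Proof.
case=> legal_xy heaviest /legal_move_add_arc legal_a.
have heavier := heaviest _ _ (legal_move_sym legal_xy).
have heavier_a := heaviest _ _ legal_a.
apply: le_trans (potential_le (copy_weight_round D x y a1 a2)) _.
rewrite !big_split sumrN -!mulr_sumr /=.
rewrite -/(potential D) -/(arc_weight D x y) -/(arc_weight D y x).
rewrite -/(arc_weight D a1 a2).
have := arc_weight_ge0 D y x; have := arc_weight_ge0 D a1 a2.
have := lam_ge1; have := lam_le2; nra.
Qed.

(* Before any move every copy has weight 1. *)
Lemma potential_empty : potential (@empty_orientation n) <= (n ^ k)%:R.
Proof.
apply: (@le_trans _ _ (\sum_(f : copy) 1)); last first.
  by rewrite sumr_const card_ffun !card_ord.
rewrite /potential big_mkcond /=; apply: ler_sum => f _.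
rewrite /copy_weight; case: ifP => // _; case: ifP => // _.
suff -> : copy_realized (@empty_orientation n) f = 0%N by [].
by apply/eqP; rewrite cards_eq0; apply/eqP/setP=> p; rewrite !inE andbF.
Qed.

(* In an antisymmetric orientation, a copy of T is alive with all its arcs
   realized, so it alone contributes lam ^ e(T) to the potential. *)
Lemma potential_of_copy D : antisymmetric D -> contains_copy T D ->
  lam ^+ #|arcs T| <= potential D.
Proof.
move=> antiD [g [g_inj g_copy]]; pose f : copy := finfun g.
have fE : f =1 g by move=> i; rewrite ffunE.
have f_inj : injectiveb f by apply/injectiveP=> i j; rewrite !fE; exact: g_inj.
have -> : lam ^+ #|arcs T| = copy_weight D f.
  rewrite /copy_weight ifT; last first.
    by apply/forall_inP=> p; rewrite inE !fE => /g_copy/antiD.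
  congr (_ ^+ _); apply: eq_card => p; rewrite !inE !fE.
  by case Tp: (T p.1 p.2); rewrite //= g_copy.
rewrite /potential (bigD1 f) //= lerDl.
by apply: sumr_ge0 => h _; exact: copy_weight_ge0.
Qed.

Lemma no_copy_below D : antisymmetric D -> potential D < lam ^+ #|arcs T| ->
  ~ contains_copy T D.
Proof.
move=> antiD low /(potential_of_copy antiD) high.
by have := le_lt_trans high low; rewrite ltxx.
Qed.

(* OBreaker's strategy wins from every antisymmetric position of potential
   below lam ^ e(T) with OBreaker to move: the potential never increases over
   a round, so the final orientation contains no copy of T. *)
Lemma obreaker_wins_below m D : (undirected_pairs D < m)%N -> antisymmetric D ->
  potential D < lam ^+ #|arcs T| -> OBreaker_wins T false D.
Proof.
elim: m D => [//|m IH] D small antiD low.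
have [/existsP[[u v] legal_uv] | no_move] :=
  boolP [exists p : 'I_n * 'I_n, legal_move D p.1 p.2]; last first.
  by apply: OBw_end; [exact: all_directed_no_move | exact: no_copy_below].
have [x [y best]] := heaviest_pair_exists legal_uv.
have legal_yx := legal_move_sym (proj1 best).
apply: OBw_breaker; first exact: not_all_directed_move legal_uv.
exists y, x; split=> //; set D1 := add_arc D y x.
have anti1 : antisymmetric D1 by exact: antisymmetric_add_arc.
have low1 : potential D1 < lam ^+ #|arcs T|.
  exact: le_lt_trans (potential_breaker_move best) low.
have [/existsP[[a b] legal_ab] | no_move1] :=
  boolP [exists p : 'I_n * 'I_n, legal_move D1 p.1 p.2]; last first.
  by apply: OBw_end; [exact: all_directed_no_move | exact: no_copy_below].
apply: OBw_maker; first exact: not_all_directed_move legal_ab.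
move=> a1 a2 legal_a; apply: IH.
- have := undirected_pairs_add_arc legal_a.
  have := undirected_pairs_add_arc legal_yx; rewrite -/D1; lia.
- exact: antisymmetric_add_arc.
- exact: le_lt_trans (potential_round best legal_a) low.
Qed.

End Potential.

Lemma card_arcs_transpose (k : nat) (T : rel 'I_k) :
  #|arcs (fun i j => T j i)| = #|arcs T|.
Proof.
pose swap (p : 'I_k * 'I_k) := (p.2, p.1).
have swapK : involutive swap by case.
rewrite -(card_imset _ (inv_inj swapK)); apply: eq_card => p.
by rewrite -{1}(swapK p) (mem_imset _ _ (inv_inj swapK)) !inE.
Qed.

Lemma tournament_arcs (k : nat) (T : rel 'I_k) : is_tournament T ->
  (k * k - k <= 2 * #|arcs T|)%N.
Proof.
case=> _ total; set diag := (fun i : 'I_k => (i, i)) @: [set: 'I_k].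
have card_diag : #|diag| = k by rewrite card_imset ?cardsT ?card_ord // => i j [].
have cover : ~: diag \subset arcs T :|: arcs (fun i j => T j i).
  apply/subsetP=> -[i j]; rewrite inE => off_diag.
  have ij : i != j by apply: contraNneq off_diag => ->; exact: imset_f.
  by rewrite !inE; case/andP: (total _ _ ij).
have := leq_trans (subset_leq_card cover) (leq_card_setU _ _).
rewrite (card_arcs_transpose T); have := cardsC diag.
rewrite card_prod card_ord card_diag => <-.
by rewrite addKn mul2n -addnn.
Qed.

(* The arithmetic content of k >= 4 log2 n + 2: with e >= k(k-1)/2,
   2 * n ^ (2k) < 2 ^ e. *)
Lemma threshold_exp (n k e : nat) : (2 <= n)%N -> (n ^ 4 <= 2 ^ (k - 2))%N ->
  (k * k - k <= 2 * e)%N -> (2 * n ^ (2 * k) < 2 ^ e)%N.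
Proof.
move=> n_ge2 nk ke.
have k_gt2 : (2 < k)%N.
  rewrite ltnNge; apply/negP=> k_le2; move: nk.
  rewrite (_ : k - 2 = 0)%N; last by lia.
  by have := leq_exp2r 2 n (isT : 0 < 4)%N; rewrite n_ge2; lia.
rewrite -ltn_sqr (@leq_ltn_trans (2 ^ 2 * (2 ^ (k - 2)) ^ k)) //.
  rewrite expnMn -expnM (_ : (2 * k * 2 = 4 * k)%N); last by lia.
  by rewrite expnM leq_mul2l leq_exp2r ?nk ?orbT //; lia.
by rewrite -!expnM -expnD ltn_exp2l //; nia.
Qed.

Lemma threshold_real (R : realFieldType) (lam : R) (n k e : nat) :
  lam ^+ 2 = 2 -> 0 <= lam -> (2 * n ^ (2 * k) < 2 ^ e)%N ->
  lam * (n ^ k)%:R < lam ^+ e.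
Proof.
move=> lam_sqr lam_ge0 nat_bound.
rewrite -(@ltr_pXn2r _ 2) ?nnegrE ?mulr_ge0 ?exprn_ge0 //.
rewrite exprMn -exprM mulnC exprM lam_sqr -!natrX -natrM ltr_nat.
by rewrite -expnM [(k * 2)%N]mulnC.
Qed.

Local Close Scope ring_scope.

Theorem theorem3 : exists N : nat, forall n k : nat, N <= n ->
  2 <= k -> n ^ 4 <= 2 ^ (k - 2) ->
  forall T : rel 'I_k, is_tournament T ->
  OBreaker_has_winning_strategy n T.
Proof.
exists 2 => n k n_ge2 _ nk T T_tour.
pose lam : realalg := Num.sqrt 2.
have lam_sqr : (lam ^+ 2 = 2)%R by rewrite sqr_sqrtr.
have lam_ge0 : (0 <= lam)%R by rewrite sqrtr_ge0.
have lam_ge1 : (1 <= lam)%R by nra.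
have below : (lam * (n ^ k)%:R < lam ^+ #|arcs T|)%R.
  exact/threshold_real/threshold_exp/tournament_arcs.
have legal0 : legal_move (@empty_orientation n)
  (Ordinal (ltnW n_ge2)) (Ordinal n_ge2) by [].
apply: OBw_maker; first exact: not_all_directed_move legal0.
move=> x y legal_xy; apply: (obreaker_wins_below lam_sqr lam_ge1 (ltnSn _)).
  exact: antisymmetric_add_arc.
apply: le_lt_trans below; apply: le_trans (potential_add_arc T lam_ge1 _ x y) _.
by rewrite ler_wpM2l // potential_empty.
Qed.
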